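(* Let $(A,\mu,\alpha,\beta)$ be a BiHom-associative algebra and let $r=\sum_i x_i\otimes y_i\in A\otimes A$ be such that $(\alpha\otimes\alpha)(r)=r=(\beta\otimes\beta)(r)$. Define $\Delta_r:A\rightarrow A\otimes A$ by $\Delta_r(a)=\sum_i\alpha(x_i)\otimes y_i\cdot a-\sum_i a\cdot x_i\otimes\beta(y_i)$. Then $(\Delta_r\otimes\beta)\circ\Delta_r=(\alpha\otimes\Delta_r)\circ\Delta_r$ if and only if $a\bullet A(r)=A(r)\bullet a$ for all $a\in A$, where the actions of $A$ on $A\otimes A\otimes A$ are $a\bullet(x\otimes y\otimes z)=\alpha(a)\cdot x\otimes\beta(y)\otimes\beta(z)$ and $(x\otimes y\otimes z)\bullet a=\alpha(x)\otimes\alpha(y)\otimes z\cdot\beta(a)$, and $A(r)=r_{13}r_{12}-r_{12}r_{23}+r_{23}r_{13}$ with $r_{12}r_{23}=\sum_{i,j}\alpha(x_i)\otimes y_i\cdot x_j\otimes\beta(y_j)$, $r_{13}r_{12}=\sum_{i,j}x_i\cdot x_j\otimes\beta(y_j)\otimes\beta(y_i)$, $r_{23}r_{13}=\sum_{i,j}\alpha(x_i)\otimes\alpha(x_j)\otimes y_j\cdot y_i$.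
   Context: A BiHom-associative algebra is a 4-tuple $(A,\mu,\alpha,\beta)$ with $A$ a linear space, $\alpha,\beta:A\to A$ and $\mu:A\otimes A\to A$ (written $\mu(x\otimes y)=x\cdot y$) linear maps such that $\alpha\circ\beta=\beta\circ\alpha$, $\alpha(x\cdot y)=\alpha(x)\cdot\alpha(y)$, $\beta(x\cdot y)=\beta(x)\cdot\beta(y)$ and $\alpha(x)\cdot(y\cdot z)=(x\cdot y)\cdot\beta(z)$ for all $x,y,z\in A$. Work is over a base field $\Bbbk$, and $\otimes=\otimes_{\Bbbk}$. *)

From HB Require Import structures.
From mathcomp Require Import all_boot all_order all_algebra.
Set Implicit Arguments.
Unset Strict Implicit.
Unset Printing Implicit Defensive.
Import GRing.Theory.
Local Open Scope ring_scope.

(* Elements of A (x) A and A (x) A (x) A are represented as finite formal sums of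
   pure tensors, i.e. lists  seq (A * A)  /  seq (A * A * A)  (scalars are absorbed
   into the first factor, every tensor is such a finite sum).
   Two such formal sums denote the same tensor iff they agree under every
   f (x) g (x) h with f, g, h linear functionals A -> K  (over a field the
   canonical map A(x)A(x)A -> (A^* (x) A^* (x) A^* )^* is injective). *)

Section BiHom.
Variables (K : fieldType) (A : lmodType K).

Definition lin_map (f : A -> A) : Prop :=
  forall (c : K) (u v : A), f (c *: u + v) = c *: f u + f v.

Definition lin_functional (f : A -> K) : Prop :=
  forall (c : K) (u v : A), f (c *: u + v) = c * f u + f v.

Definition bilin_map (mu : A -> A -> A) : Prop :=
  (forall (c : K) (u v w : A), mu (c *: u + v) w = c *: mu u w + mu v w) /\
  (forall (c : K) (u v w : A), mu w (c *: u + v) = c *: mu w u + mu w v).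

Record BiHomAssoc (mu : A -> A -> A) (alpha beta : A -> A) : Prop := {
  bh_mu_lin : bilin_map mu;
  bh_alpha_lin : lin_map alpha;
  bh_beta_lin : lin_map beta;
  bh_comm : forall x, alpha (beta x) = beta (alpha x);
  bh_alpha_mult : forall x y, alpha (mu x y) = mu (alpha x) (alpha y);
  bh_beta_mult : forall x y, beta (mu x y) = mu (beta x) (beta y);
  bh_assoc : forall x y z, mu (alpha x) (mu y z) = mu (mu x y) (beta z)
}.

Definition tensor2 := seq (A * A).
Definition tensor3 := seq (A * A * A).

Definition ev2 (f g : A -> K) (t : tensor2) : K :=
  \sum_(p <- t) f p.1 * g p.2.
Definition ev3 (f g h : A -> K) (t : tensor3) : K :=
  \sum_(p <- t) f p.1.1 * g p.1.2 * h p.2.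

Definition teq2 (t s : tensor2) : Prop :=
  forall f g, lin_functional f -> lin_functional g -> ev2 f g t = ev2 f g s.
Definition teq3 (t s : tensor3) : Prop :=
  forall f g h, lin_functional f -> lin_functional g -> lin_functional h ->
    ev3 f g h t = ev3 f g h s.

Definition tmap2 (f g : A -> A) (t : tensor2) : tensor2 :=
  [seq (f p.1, g p.2) | p <- t].

Definition tneg3 (t : tensor3) : tensor3 :=
  [seq (- p.1.1, p.1.2, p.2) | p <- t].
Definition tsub3 (t s : tensor3) : tensor3 := t ++ tneg3 s.

Variables (mu : A -> A -> A) (alpha beta : A -> A).

Definition Delta_r (r : tensor2) (a : A) : tensor2 :=
  [seq (alpha p.1, mu p.2 a) | p <- r] ++ [seq (- mu a p.1, beta p.2) | p <- r].

Definition Delta_ot_beta (r : tensor2) (t : tensor2) : tensor3 :=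
  flatten [seq [seq (q.1, q.2, beta p.2) | q <- Delta_r r p.1] | p <- t].
Definition alpha_ot_Delta (r : tensor2) (t : tensor2) : tensor3 :=
  flatten [seq [seq (alpha p.1, q.1, q.2) | q <- Delta_r r p.2] | p <- t].

Definition r12r23 (r : tensor2) : tensor3 :=
  [seq (alpha p.1, mu p.2 q.1, beta q.2) | p <- r, q <- r].
Definition r13r12 (r : tensor2) : tensor3 :=
  [seq (mu p.1 q.1, beta q.2, beta p.2) | p <- r, q <- r].
Definition r23r13 (r : tensor2) : tensor3 :=
  [seq (alpha p.1, alpha q.1, mu q.2 p.2) | p <- r, q <- r].

Definition Ar (r : tensor2) : tensor3 :=
  tsub3 (r13r12 r) (r12r23 r) ++ r23r13 r.

Definition actL (a : A) (t : tensor3) : tensor3 :=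
  [seq (mu (alpha a) p.1.1, beta p.1.2, beta p.2) | p <- t].
Definition actR (t : tensor3) (a : A) : tensor3 :=
  [seq (alpha p.1.1, alpha p.1.2, mu p.2 (beta a)) | p <- t].

End BiHom.

From HB Require Import structures.
From mathcomp Require Import all_boot all_order all_algebra.
From mathcomp Require Import ring.
Import GRing.Theory.
Set Implicit Arguments.
Unset Strict Implicit.
Local Open Scope ring_scope.

(* Evaluate both sides against f (x) g (x) h for linear functionals f, g, h.
   The coassociator (Delta_r (x) beta) Delta_r (a) - (alpha (x) Delta_r) Delta_r (a)
   expands into eight double sums over r, and a . A(r) - A(r) . a into six.
   Invariance of r under alpha (x) alpha and beta (x) beta lets one replace a
   summation index (x_j, y_j) by (alpha x_j, alpha y_j) or (beta x_j, beta y_j);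
   combined with BiHom-associativity and multiplicativity of alpha and beta, this
   turns six of the eight terms into the six terms of a . A(r) - A(r) . a, while
   the remaining two cancel. So the two differences are equal, and one vanishes
   exactly when the other does. *)

Section LinearMaps.
Variables (K : fieldType) (A : lmodType K).
Implicit Types (m : A -> A) (phi psi : A -> K).

Lemma lin_map0 m : lin_map m -> m 0 = 0.
Proof.
by move=> Hm; have := Hm 1 0 0; rewrite scaler0 addr0 scale1r -{1}(addr0 (m 0)) => /addrI.
Qed.

Lemma lin_mapN m u : lin_map m -> m (- u) = - m u.
Proof. by move=> Hm; have := Hm (-1) u 0; rewrite !addr0 (lin_map0 Hm) addr0 !scaleN1r. Qed.

Lemma lin_functional0 phi : lin_functional phi -> phi 0 = 0.
Proof.
by move=> Hp; have := Hp 1 0 0; rewrite scaler0 addr0 mul1r -{1}(addr0 (phi 0)) => /addrI.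
Qed.

Lemma lin_functionalN phi u : lin_functional phi -> phi (- u) = - phi u.
Proof.
by move=> Hp; have := Hp (-1) u 0; rewrite !addr0 (lin_functional0 Hp) addr0 scaleN1r mulN1r.
Qed.

Lemma lin_functional_comp phi m :
  lin_functional phi -> lin_map m -> lin_functional (fun u => phi (m u)).
Proof. by move=> Hp Hm c u v; rewrite Hm Hp. Qed.

Lemma lin_functionalMl c phi : lin_functional phi -> lin_functional (fun u => c * phi u).
Proof. by move=> Hp c' u v; rewrite Hp mulrDr mulrCA. Qed.

Lemma lin_functionalMr c phi : lin_functional phi -> lin_functional (fun u => phi u * c).
Proof. by move=> Hp c' u v; rewrite Hp mulrDl mulrA. Qed.

Lemma lin_functional_sum (I : Type) (s : seq I) (F : I -> A -> K) :
  (forall i, lin_functional (F i)) -> lin_functional (fun u => \sum_(i <- s) F i u).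
Proof. by move=> HF c u v; rewrite mulr_sumr -big_split; apply: eq_bigr => i _; apply: HF. Qed.

Lemma sum_tensor_invariant m (r : tensor2 A) phi psi (F G : A * A -> K) :
  teq2 (tmap2 m m r) r -> lin_functional phi -> lin_functional psi ->
  (forall q, F q = phi q.1 * psi q.2) -> (forall q, G q = phi (m q.1) * psi (m q.2)) ->
  \sum_(q <- r) F q = \sum_(q <- r) G q.
Proof.
move=> Hr Hp Hq HF HG; rewrite (eq_bigr _ (fun q _ => HF q)) (eq_bigr _ (fun q _ => HG q)).
by have := Hr phi psi Hp Hq; rewrite /ev2 big_map.
Qed.

Lemma teq3_iff_ev3_subr (t s t' s' : tensor3 A) :
  (forall f g h, lin_functional f -> lin_functional g -> lin_functional h ->
     ev3 f g h t - ev3 f g h s = ev3 f g h t' - ev3 f g h s') ->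
  teq3 t s <-> teq3 t' s'.
Proof.
move=> E; split=> T f g h Hf Hg Hh; apply/eqP; rewrite -subr_eq0.
  by rewrite -(E f g h) ?T ?subrr.
by rewrite (E f g h) ?T ?subrr.
Qed.
End LinearMaps.

Section Coassociator.
Variables (K : fieldType) (A : lmodType K) (mu : A -> A -> A) (alpha beta : A -> A).
Hypothesis bihom : BiHomAssoc mu alpha beta.
Variable r : tensor2 A.
Hypotheses (alpha_r : teq2 (tmap2 alpha alpha r) r) (beta_r : teq2 (tmap2 beta beta r) r).
Variables (f g h : A -> K).
Hypotheses (Hf : lin_functional f) (Hg : lin_functional g) (Hh : lin_functional h).
Variable a : A.

Let assoc := bh_assoc bihom.
Let alpha_mul := bh_alpha_mult bihom.
Let beta_mul := bh_beta_mult bihom.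
Let alpha_beta := bh_comm bihom.
Let alpha_lin := bh_alpha_lin bihom.
Let beta_lin := bh_beta_lin bihom.
Let mu_linr w : lin_map (mu w).
Proof. by move=> c u v; rewrite (proj2 (bh_mu_lin bihom)). Qed.
Let mu_linl w : lin_map (mu^~ w).
Proof. by move=> c u v; rewrite (proj1 (bh_mu_lin bihom)). Qed.
Let muNl u w : mu (- u) w = - mu u w. Proof. exact: (lin_mapN u (mu_linl w)). Qed.
Let muNr w u : mu w (- u) = - mu w u. Proof. exact: lin_mapN. Qed.
Let alphaN u : alpha (- u) = - alpha u. Proof. exact: lin_mapN. Qed.
Let fN u : f (- u) = - f u. Proof. exact: lin_functionalN. Qed.
Let gN u : g (- u) = - g u. Proof. exact: lin_functionalN. Qed.

Lemma ev3_Delta_ot_beta_Delta :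
  ev3 f g h (Delta_ot_beta mu alpha beta r (Delta_r mu alpha beta r a)) =
    \sum_(i <- r) \sum_(j <- r) f (alpha j.1) * g (mu j.2 (alpha i.1)) * h (beta (mu i.2 a))
  - \sum_(i <- r) \sum_(j <- r) f (mu (alpha i.1) j.1) * g (beta j.2) * h (beta (mu i.2 a))
  - \sum_(i <- r) \sum_(j <- r) f (alpha j.1) * g (mu j.2 (mu a i.1)) * h (beta (beta i.2))
  + \sum_(i <- r) \sum_(j <- r) f (mu (mu a i.1) j.1) * g (beta j.2) * h (beta (beta i.2)).
Proof.
rewrite /ev3 /Delta_ot_beta big_flatten /= big_map {1}/Delta_r big_cat /= !big_map.
under eq_bigr => p _ do rewrite big_map big_cat /= !big_map.
under [X in _ + X]eq_bigr => p _ do rewrite big_map big_cat /= !big_map.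
rewrite !big_split /= -!sumrN addrA; congr (_ + _ + _ + _); apply: eq_bigr => i _;
  rewrite -?sumrN; apply: eq_bigr => j _; rewrite ?muNl ?muNr ?fN ?gN; ring.
Qed.

Lemma ev3_alpha_ot_Delta_Delta :
  ev3 f g h (alpha_ot_Delta mu alpha beta r (Delta_r mu alpha beta r a)) =
    \sum_(i <- r) \sum_(j <- r) f (alpha (alpha i.1)) * g (alpha j.1) * h (mu j.2 (mu i.2 a))
  - \sum_(i <- r) \sum_(j <- r) f (alpha (alpha i.1)) * g (mu (mu i.2 a) j.1) * h (beta j.2)
  - \sum_(i <- r) \sum_(j <- r) f (alpha (mu a i.1)) * g (alpha j.1) * h (mu j.2 (beta i.2))
  + \sum_(i <- r) \sum_(j <- r) f (alpha (mu a i.1)) * g (mu (beta i.2) j.1) * h (beta j.2).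
Proof.
rewrite /ev3 /alpha_ot_Delta big_flatten /= big_map {1}/Delta_r big_cat /= !big_map.
under eq_bigr => p _ do rewrite big_map big_cat /= !big_map.
under [X in _ + X]eq_bigr => p _ do rewrite big_map big_cat /= !big_map.
rewrite !big_split /= -!sumrN addrA; congr (_ + _ + _ + _); apply: eq_bigr => i _;
  rewrite -?sumrN; apply: eq_bigr => j _; rewrite ?muNl ?muNr ?alphaN ?fN ?gN; ring.
Qed.

Lemma ev3_actL_Ar :
  ev3 f g h (actL mu alpha beta a (Ar mu alpha beta r)) =
    \sum_(i <- r) \sum_(j <- r)
      f (mu (alpha a) (mu i.1 j.1)) * g (beta (beta j.2)) * h (beta (beta i.2))
  - \sum_(i <- r) \sum_(j <- r)
      f (mu (alpha a) (alpha i.1)) * g (beta (mu i.2 j.1)) * h (beta (beta j.2))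
  + \sum_(i <- r) \sum_(j <- r)
      f (mu (alpha a) (alpha i.1)) * g (beta (alpha j.1)) * h (beta (mu j.2 i.2)).
Proof.
rewrite /ev3 /actL /Ar /tsub3 /tneg3 /r13r12 /r12r23 /r23r13 !map_cat !big_cat /=.
rewrite !big_map !big_allpairs_dep /= -!sumrN; congr (_ + _ + _); apply: eq_bigr => i _.
by rewrite -sumrN; apply: eq_bigr => j _; rewrite muNr fN !mulNr.
Qed.

Lemma ev3_actR_Ar :
  ev3 f g h (actR mu alpha beta (Ar mu alpha beta r) a) =
    \sum_(i <- r) \sum_(j <- r)
      f (alpha (mu i.1 j.1)) * g (alpha (beta j.2)) * h (mu (beta i.2) (beta a))
  - \sum_(i <- r) \sum_(j <- r)
      f (alpha (alpha i.1)) * g (alpha (mu i.2 j.1)) * h (mu (beta j.2) (beta a))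
  + \sum_(i <- r) \sum_(j <- r)
      f (alpha (alpha i.1)) * g (alpha (alpha j.1)) * h (mu (mu j.2 i.2) (beta a)).
Proof.
rewrite /ev3 /actR /Ar /tsub3 /tneg3 /r13r12 /r12r23 /r23r13 !map_cat !big_cat /=.
rewrite !big_map !big_allpairs_dep /= -!sumrN; congr (_ + _ + _); apply: eq_bigr => i _.
by rewrite -sumrN; apply: eq_bigr => j _; rewrite alphaN fN !mulNr.
Qed.

Lemma coassoc_r13r12_actL :
  \sum_(i <- r) \sum_(j <- r) f (mu (mu a i.1) j.1) * g (beta j.2) * h (beta (beta i.2)) =
  \sum_(i <- r) \sum_(j <- r)
    f (mu (alpha a) (mu i.1 j.1)) * g (beta (beta j.2)) * h (beta (beta i.2)).
Proof.
apply: eq_bigr => i _; apply: (sum_tensor_invariant beta_r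
  (phi := fun u => f (mu (mu a i.1) u)) (psi := fun v => g (beta v) * h (beta (beta i.2)))).
- exact: lin_functional_comp.
- exact/lin_functionalMr/lin_functional_comp.
- by move=> q; rewrite mulrA.
- by move=> q; rewrite assoc mulrA.
Qed.

Lemma coassoc_r12r23_actL :
  \sum_(i <- r) \sum_(j <- r) f (alpha (mu a i.1)) * g (mu (beta i.2) j.1) * h (beta j.2) =
  \sum_(i <- r) \sum_(j <- r)
    f (mu (alpha a) (alpha i.1)) * g (beta (mu i.2 j.1)) * h (beta (beta j.2)).
Proof.
apply: eq_bigr => i _; apply: (sum_tensor_invariant beta_r
  (phi := fun u => f (alpha (mu a i.1)) * g (mu (beta i.2) u)) (psi := fun v => h (beta v))).
- exact/lin_functionalMl/lin_functional_comp.
- exact: lin_functional_comp.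
- by [].
- by move=> q; rewrite alpha_mul beta_mul.
Qed.

Lemma coassoc_r23r13_actL :
  \sum_(i <- r) \sum_(j <- r) f (alpha (mu a i.1)) * g (alpha j.1) * h (mu j.2 (beta i.2)) =
  \sum_(i <- r) \sum_(j <- r)
    f (mu (alpha a) (alpha i.1)) * g (beta (alpha j.1)) * h (beta (mu j.2 i.2)).
Proof.
apply: eq_bigr => i _; apply: (sum_tensor_invariant beta_r
  (phi := fun u => f (alpha (mu a i.1)) * g (alpha u)) (psi := fun v => h (mu v (beta i.2)))).
- exact/lin_functionalMl/lin_functional_comp.
- exact: lin_functional_comp.
- by [].
- by move=> q; rewrite alpha_mul alpha_beta beta_mul.
Qed.

Lemma coassoc_r13r12_actR :
  \sum_(i <- r) \sum_(j <- r) f (mu (alpha i.1) j.1) * g (beta j.2) * h (beta (mu i.2 a)) =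
  \sum_(i <- r) \sum_(j <- r)
    f (alpha (mu i.1 j.1)) * g (alpha (beta j.2)) * h (mu (beta i.2) (beta a)).
Proof.
apply: eq_bigr => i _; apply: (sum_tensor_invariant alpha_r
  (phi := fun u => f (mu (alpha i.1) u)) (psi := fun v => g (beta v) * h (beta (mu i.2 a)))).
- exact: lin_functional_comp.
- exact/lin_functionalMr/lin_functional_comp.
- by move=> q; rewrite mulrA.
- by move=> q; rewrite alpha_mul alpha_beta beta_mul mulrA.
Qed.

Lemma coassoc_r12r23_actR :
  \sum_(i <- r) \sum_(j <- r) f (alpha j.1) * g (mu j.2 (alpha i.1)) * h (beta (mu i.2 a)) =
  \sum_(i <- r) \sum_(j <- r)
    f (alpha (alpha i.1)) * g (alpha (mu i.2 j.1)) * h (mu (beta j.2) (beta a)).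
Proof.
rewrite exchange_big; apply: (sum_tensor_invariant alpha_r (phi := fun u => f (alpha u))
  (psi := fun v => \sum_(j <- r) g (mu v (alpha j.1)) * h (beta (mu j.2 a)))).
- exact: lin_functional_comp.
- by apply: lin_functional_sum => j; exact/lin_functionalMr/lin_functional_comp.
- by move=> q; rewrite mulr_sumr; apply: eq_bigr => j _; rewrite mulrA.
- move=> q; rewrite mulr_sumr; apply: eq_bigr => j _.
  by rewrite alpha_mul beta_mul mulrA.
Qed.

Lemma coassoc_r23r13_actR :
  \sum_(i <- r) \sum_(j <- r) f (alpha (alpha i.1)) * g (alpha j.1) * h (mu j.2 (mu i.2 a)) =
  \sum_(i <- r) \sum_(j <- r)
    f (alpha (alpha i.1)) * g (alpha (alpha j.1)) * h (mu (mu j.2 i.2) (beta a)).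
Proof.
apply: eq_bigr => i _; apply: (sum_tensor_invariant alpha_r
  (phi := fun u => f (alpha (alpha i.1)) * g (alpha u)) (psi := fun v => h (mu v (mu i.2 a)))).
- exact/lin_functionalMl/lin_functional_comp.
- exact: lin_functional_comp.
- by [].
- by move=> q; rewrite assoc.
Qed.

Lemma coassoc_cross_terms :
  \sum_(i <- r) \sum_(j <- r) f (alpha j.1) * g (mu j.2 (mu a i.1)) * h (beta (beta i.2)) =
  \sum_(i <- r) \sum_(j <- r) f (alpha (alpha i.1)) * g (mu (mu i.2 a) j.1) * h (beta j.2).
Proof.
rewrite exchange_big; apply: (sum_tensor_invariant alpha_r (phi := fun u => f (alpha u))
  (psi := fun v => \sum_(j <- r) g (mu v (mu a j.1)) * h (beta (beta j.2)))).
- exact: lin_functional_comp.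
- by apply: lin_functional_sum => j; exact/lin_functionalMr/lin_functional_comp.
- by move=> q; rewrite mulr_sumr; apply: eq_bigr => j _; rewrite mulrA.
- move=> q; rewrite mulr_sumr; apply: (sum_tensor_invariant beta_r
    (phi := fun u => f (alpha (alpha q.1)) * g (mu (mu q.2 a) u)) (psi := fun v => h (beta v))).
  + exact/lin_functionalMl/lin_functional_comp.
  + exact: lin_functional_comp.
  + by [].
  + by move=> j; rewrite assoc mulrA.
Qed.

Lemma coassociator_ev3 :
  ev3 f g h (Delta_ot_beta mu alpha beta r (Delta_r mu alpha beta r a)) -
  ev3 f g h (alpha_ot_Delta mu alpha beta r (Delta_r mu alpha beta r a)) =
  ev3 f g h (actL mu alpha beta a (Ar mu alpha beta r)) -
  ev3 f g h (actR mu alpha beta (Ar mu alpha beta r) a).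
Proof.
rewrite ev3_Delta_ot_beta_Delta ev3_alpha_ot_Delta_Delta ev3_actL_Ar ev3_actR_Ar.
rewrite coassoc_r13r12_actL coassoc_r12r23_actL coassoc_r23r13_actL.
rewrite coassoc_r13r12_actR coassoc_r12r23_actR coassoc_r23r13_actR coassoc_cross_terms.
ring.
Qed.
End Coassociator.

Theorem proposition5p4 (K : fieldType) (A : lmodType K)
  (mu : A -> A -> A) (alpha beta : A -> A) (r : tensor2 A) :
  BiHomAssoc mu alpha beta ->
  teq2 (tmap2 alpha alpha r) r ->
  teq2 (tmap2 beta beta r) r ->
  ((forall a : A, teq3 (Delta_ot_beta mu alpha beta r (Delta_r mu alpha beta r a))
                       (alpha_ot_Delta mu alpha beta r (Delta_r mu alpha beta r a)))
   <->
   (forall a : A, teq3 (actL mu alpha beta a (Ar mu alpha beta r))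
                       (actR mu alpha beta (Ar mu alpha beta r) a))).
Proof.
move=> bihom alpha_r beta_r.
have coassoc_iff a : teq3 (Delta_ot_beta mu alpha beta r (Delta_r mu alpha beta r a))
                       (alpha_ot_Delta mu alpha beta r (Delta_r mu alpha beta r a)) <->
                     teq3 (actL mu alpha beta a (Ar mu alpha beta r))
                       (actR mu alpha beta (Ar mu alpha beta r) a).
  by apply: teq3_iff_ev3_subr => f g h Hf Hg Hh; exact: coassociator_ev3.
by split=> E a; apply/coassoc_iff.
Qed.
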